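(* Let $\mathrm{VES}$, $\mathrm{VFS}$, $\mathrm{CES}$, $\mathrm{CNF}$ and the maps $\Psi,\Psi_v,\Psi_x,\Theta,\Theta_v,\Theta_x,\Upsilon,\Phi$ be as in the context. Then $\mathrm{VES}\cong\mathrm{VFS}$ and $\mathrm{CES}\cong\mathrm{CNF}$, in the following sense: (a) for all terms $M$, values $V$ and elements $c_x$ of $\mathrm{VES}$: $\Theta(\Psi M)=M$, $\Theta_v(\Psi_v V)=V$, $\Theta_x(\Psi_x(c_x))=c_x$; for all terms $M$, values $V$ and formal contexts $c$ of $\mathrm{VFS}$: $\Psi(\Theta M)=M$, $\Psi_v(\Theta_v V)=V$, $\Psi_x(\Theta_x(c))=c$; if $M_1\to M_2$ in $\mathrm{VES}$ then $\Psi M_1\to\Psi M_2$ in $\mathrm{VFS}$; and if $M_1\to M_2$ in $\mathrm{VFS}$ then $\Theta M_1\to\Theta M_2$ in $\mathrm{VES}$; (b) for all terms $M$ and values $V$ of $\mathrm{CES}$: $\Phi(\Upsilon M)=M$ and $\Phi(\Upsilon V)=V$; for all terms $M$ and values $V$ of $\mathrm{CNF}$: $\Upsilon(\Phi M)=M$ and $\Upsilon(\Phi V)=V$; if $M_1\to M_2$ in $\mathrm{CES}$ then $\Upsilon M_1\to\Upsilon M_2$ in $\mathrm{CNF}$; and if $M_1\to M_2$ in $\mathrm{CNF}$ then $\Phi M_1\to\Phi M_2$ in $\mathrm{CES}$.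
   Context: Terms are considered up to $\alpha$-conversion; $[V/x]$ is capture-avoiding substitution; $\to$ is one-step reduction (closure of the listed rules under all constructors). In all four calculi values are $V,W::=x\mid\lambda x.M$. $\mathrm{VES}$ (value-enclosed style): terms $M,N::=V\mid \mathsf{let}\,x:=V\,\mathsf{in}\,c_x$, where for a variable $x$ the class $c_x::= M\mid \mathsf{let}\,y:=xW\,\mathsf{in}\,N$ with $x\notin FV(W)\cup FV(N)$ ($\mathsf{let}\,x:=\dots\,\mathsf{in}\,B$ binds $x$ in $B$). An operation $\mathsf{LET}\,y:=M\,\mathsf{in}\,P$ (and $\mathsf{LET}\,y:=c_z\,\mathsf{in}\,P$, with $z\notin FV(P)$) is defined by: $\mathsf{LET}\,y:=V\,\mathsf{in}\,P=\mathsf{let}\,y:=V\,\mathsf{in}\,P$; $\mathsf{LET}\,y:=(\mathsf{let}\,z:=V\,\mathsf{in}\,c_z)\,\mathsf{in}\,P=\mathsf{let}\,z:=V\,\mathsf{in}\,\mathsf{LET}\,y:=c_z\,\mathsf{in}\,P$; $\mathsf{LET}\,y:=(\mathsf{let}\,x:=zW\,\mathsf{in}\,N)\,\mathsf{in}\,P=\mathsf{let}\,x:=zW\,\mathsf{in}\,\mathsf{LET}\,y:=N\,\mathsf{in}\,P$. Rules: $(B_v)$ $\mathsf{let}\,y:=\lambda x.M\,\mathsf{in}\,\mathsf{let}\,z:=yV\,\mathsf{in}\,P\to\mathsf{let}\,x:=V\,\mathsf{in}\,\mathsf{LET}\,z:=M\,\mathsf{in}\,P$; $(\mathit{let}_v)$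 $\mathsf{let}\,y:=V\,\mathsf{in}\,N\to[V/y]N$ ($N$ a term). $\mathrm{VFS}$: terms $M,N::=\uparrow V\mid \mathsf{C}_v(V,c)$; formal contexts $c::= x.M\mid (W,x.M)$ ($x$ bound in $M$). Auxiliary: $\mathsf{C}_v(\uparrow V:c')=\mathsf{C}_v(V,c')$, $\mathsf{C}_v(\mathsf{C}_v(V,c):c')=\mathsf{C}_v(V,(c:c'))$, $((x.M):c')=x.\mathsf{C}_v(M:c')$, $((W,x.M):c')=(W,x.\mathsf{C}_v(M:c'))$. Rules: $(B_v)$ $\mathsf{C}_v(\lambda x.M,(V,y.N))\to \mathsf{C}_v(V,x.\mathsf{C}_v(M:y.N))$; $(\sigma_v)$ $\mathsf{C}_v(V,y.N)\to [V/y]N$. $\mathrm{CES}$ (continuation-enclosing style): terms $M::=V\mid\mathsf{let}\,x:=VW\,\mathsf{in}\,M$. $\mathsf{LET}\,y:=V\,\mathsf{in}\,P=[V/y]P$; $\mathsf{LET}\,y:=(\mathsf{let}\,x:=VW\,\mathsf{in}\,M)\,\mathsf{in}\,P=\mathsf{let}\,x:=VW\,\mathsf{in}\,\mathsf{LET}\,y:=M\,\mathsf{in}\,P$. Rule: $(\beta_v)$ $\mathsf{let}\,y:=(\lambda x.M)V\,\mathsf{in}\,P\to\mathsf{LET}\,y:=[V/x]M\,\mathsf{in}\,P$. $\mathrm{CNF}$ (commutative normal forms of call-by-value generalized applications): terms $M::=V\mid V(W,x.M)$ ($x$ bound in $M$). Left substitution: $\langle V\backslash x\rangle P=[V/x]P$,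 $\langle V(W,y.N)\backslash x\rangle P=V(W,y.\langle N\backslash x\rangle P)$. Rule: $(\beta_v)$ $(\lambda y.M)(W,x.P)\to\langle [W/y]M\backslash x\rangle P$. Maps: $\Psi(V)=\uparrow\Psi_v(V)$; $\Psi(\mathsf{let}\,x:=V\,\mathsf{in}\,c_x)=\mathsf{C}_v(\Psi_v V,\Psi_x(c_x))$; $\Psi_v(x)=x$; $\Psi_v(\lambda x.M)=\lambda x.\Psi M$; $\Psi_x(M)=x.\Psi M$; $\Psi_x(\mathsf{let}\,y:=xW\,\mathsf{in}\,N)=(\Psi_v W,y.\Psi N)$. $\Theta(\uparrow V)=\Theta_v(V)$; $\Theta(\mathsf{C}_v(V,c))=\mathsf{let}\,x:=\Theta_v V\,\mathsf{in}\,\Theta_x(c)$ ($x$ fresh); $\Theta_v(x)=x$; $\Theta_v(\lambda x.M)=\lambda x.\Theta M$; $\Theta_x(y.M)=[x/y](\Theta M)$; $\Theta_x(W,y.N)=\mathsf{let}\,y:=x(\Theta_v W)\,\mathsf{in}\,\Theta N$. $\Upsilon(x)=x$, $\Upsilon(\lambda x.M)=\lambda x.\Upsilon M$, $\Upsilon(\mathsf{let}\,x:=VW\,\mathsf{in}\,M)=\Upsilon V(\Upsilon W,x.\Upsilon M)$; $\Phi(x)=x$, $\Phi(\lambda x.M)=\lambda x.\Phi M$, $\Phi(V(W,x.M))=\mathsf{let}\,x:=\Phi V\,\Phi W\,\mathsf{in}\,\Phi M$. *)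

(* Four call-by-value calculi, locally nameless-free de Bruijn
   encoding (terms up to alpha-conversion).  Index 0 = innermost binder. *)
From Stdlib Require Import Arith.

(*   M ::= V | let x := V in c_x                                     *)
(*   c_x ::= M  (x bound, index 0 of M)                              *)
(*         | let y := x W in N   with x notin FV(W) u FV(N)          *)
(* The side condition is built in: ECApp W N stores W in the context *)
(* outside x, and N in that context extended only by y.             *)
Inductive ves_tm : Type :=
| EVal : ves_val -> ves_tm
| ELet : ves_val -> ves_ctx -> ves_tm
with ves_val : Type :=
| EVar : nat -> ves_val
| ELam : ves_tm -> ves_val
with ves_ctx : Type :=
| ECTm : ves_tm -> ves_ctx
| ECApp : ves_val -> ves_tm -> ves_ctx.

Fixpoint e_lift_tm (k : nat) (M : ves_tm) : ves_tm :=
  match M with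
  | EVal V => EVal (e_lift_val k V)
  | ELet V c => ELet (e_lift_val k V) (e_lift_ctx k c)
  end
with e_lift_val (k : nat) (V : ves_val) : ves_val :=
  match V with
  | EVar n => EVar (if Nat.leb k n then S n else n)
  | ELam M => ELam (e_lift_tm (S k) M)
  end
with e_lift_ctx (k : nat) (c : ves_ctx) : ves_ctx :=
  match c with
  | ECTm M => ECTm (e_lift_tm (S k) M)
  | ECApp W N => ECApp (e_lift_val k W) (e_lift_tm (S k) N)
  end.

(* e_subst_tm k U M = [U/k]M (indices above k are decremented) *)
Fixpoint e_subst_tm (k : nat) (U : ves_val) (M : ves_tm) : ves_tm :=
  match M with
  | EVal V => EVal (e_subst_val k U V)
  | ELet V c => ELet (e_subst_val k U V) (e_subst_ctx k U c)
  end
with e_subst_val (k : nat) (U : ves_val) (V : ves_val) : ves_val :=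
  match V with
  | EVar n => if Nat.ltb n k then EVar n
              else if Nat.eqb n k then U else EVar (pred n)
  | ELam M => ELam (e_subst_tm (S k) (e_lift_val 0 U) M)
  end
with e_subst_ctx (k : nat) (U : ves_val) (c : ves_ctx) : ves_ctx :=
  match c with
  | ECTm M => ECTm (e_subst_tm (S k) (e_lift_val 0 U) M)
  | ECApp W N => ECApp (e_subst_val k U W) (e_subst_tm (S k) (e_lift_val 0 U) N)
  end.

(* e_LET M P = LET y := M in P   (P binds y);
   e_LETc c P = LET y := c_z in P  (z notin FV(P)); result is a c_z *)
Fixpoint e_LET (M : ves_tm) (P : ves_tm) : ves_tm :=
  match M with
  | EVal V => ELet V (ECTm P)
  | ELet V c => ELet V (e_LETc c P)
  end
with e_LETc (c : ves_ctx) (P : ves_tm) : ves_ctx :=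
  match c with
  | ECTm M => ECTm (e_LET M (e_lift_tm 1 P))
  | ECApp W N => ECApp W (e_LET N (e_lift_tm 1 P))
  end.

Inductive e_step : ves_tm -> ves_tm -> Prop :=
| e_Bv : forall M V P,   (* let y:=\x.M in let z:=yV in P -> let x:=V in LET z:=M in P *)
    e_step (ELet (ELam M) (ECApp V P)) (ELet V (ECTm (e_LET M (e_lift_tm 1 P))))
| e_letv : forall V N,
    e_step (ELet V (ECTm N)) (e_subst_tm 0 V N)
| e_val : forall V V', e_step_val V V' -> e_step (EVal V) (EVal V')
| e_let1 : forall V V' c, e_step_val V V' -> e_step (ELet V c) (ELet V' c)
| e_let2 : forall V c c', e_step_ctx c c' -> e_step (ELet V c) (ELet V c')
with e_step_val : ves_val -> ves_val -> Prop :=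
| e_lam : forall M M', e_step M M' -> e_step_val (ELam M) (ELam M')
with e_step_ctx : ves_ctx -> ves_ctx -> Prop :=
| e_ctm : forall M M', e_step M M' -> e_step_ctx (ECTm M) (ECTm M')
| e_capp1 : forall W W' N, e_step_val W W' -> e_step_ctx (ECApp W N) (ECApp W' N)
| e_capp2 : forall W N N', e_step N N' -> e_step_ctx (ECApp W N) (ECApp W N').

(*   M ::= up V | C_v(V, c);   c ::= x.M | (W, x.M)                  *)
Inductive vfs_tm : Type :=
| FRet : vfs_val -> vfs_tm
| FCv : vfs_val -> vfs_ctx -> vfs_tm
with vfs_val : Type :=
| FVar : nat -> vfs_val
| FLam : vfs_tm -> vfs_val
with vfs_ctx : Type :=
| FAbs : vfs_tm -> vfs_ctx
| FPair : vfs_val -> vfs_tm -> vfs_ctx.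

Fixpoint f_lift_tm (k : nat) (M : vfs_tm) : vfs_tm :=
  match M with
  | FRet V => FRet (f_lift_val k V)
  | FCv V c => FCv (f_lift_val k V) (f_lift_ctx k c)
  end
with f_lift_val (k : nat) (V : vfs_val) : vfs_val :=
  match V with
  | FVar n => FVar (if Nat.leb k n then S n else n)
  | FLam M => FLam (f_lift_tm (S k) M)
  end
with f_lift_ctx (k : nat) (c : vfs_ctx) : vfs_ctx :=
  match c with
  | FAbs M => FAbs (f_lift_tm (S k) M)
  | FPair W M => FPair (f_lift_val k W) (f_lift_tm (S k) M)
  end.

Fixpoint f_subst_tm (k : nat) (U : vfs_val) (M : vfs_tm) : vfs_tm :=
  match M with
  | FRet V => FRet (f_subst_val k U V)
  | FCv V c => FCv (f_subst_val k U V) (f_subst_ctx k U c)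
  end
with f_subst_val (k : nat) (U : vfs_val) (V : vfs_val) : vfs_val :=
  match V with
  | FVar n => if Nat.ltb n k then FVar n
              else if Nat.eqb n k then U else FVar (pred n)
  | FLam M => FLam (f_subst_tm (S k) (f_lift_val 0 U) M)
  end
with f_subst_ctx (k : nat) (U : vfs_val) (c : vfs_ctx) : vfs_ctx :=
  match c with
  | FAbs M => FAbs (f_subst_tm (S k) (f_lift_val 0 U) M)
  | FPair W M => FPair (f_subst_val k U W) (f_subst_tm (S k) (f_lift_val 0 U) M)
  end.

(* f_app M c' = C_v(M : c');  f_capp c c' = (c : c') *)
Fixpoint f_app (M : vfs_tm) (c' : vfs_ctx) : vfs_tm :=
  match M with
  | FRet V => FCv V c'
  | FCv V c => FCv V (f_capp c c')
  end
with f_capp (c : vfs_ctx) (c' : vfs_ctx) : vfs_ctx :=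
  match c with
  | FAbs M => FAbs (f_app M (f_lift_ctx 0 c'))
  | FPair W M => FPair W (f_app M (f_lift_ctx 0 c'))
  end.

Inductive f_step : vfs_tm -> vfs_tm -> Prop :=
| f_Bv : forall M V N,   (* C_v(\x.M,(V,y.N)) -> C_v(V, x.C_v(M : y.N)) *)
    f_step (FCv (FLam M) (FPair V N)) (FCv V (FAbs (f_app M (f_lift_ctx 0 (FAbs N)))))
| f_sigmav : forall V N,
    f_step (FCv V (FAbs N)) (f_subst_tm 0 V N)
| f_ret : forall V V', f_step_val V V' -> f_step (FRet V) (FRet V')
| f_cv1 : forall V V' c, f_step_val V V' -> f_step (FCv V c) (FCv V' c)
| f_cv2 : forall V c c', f_step_ctx c c' -> f_step (FCv V c) (FCv V c')
with f_step_val : vfs_val -> vfs_val -> Prop :=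
| f_lam : forall M M', f_step M M' -> f_step_val (FLam M) (FLam M')
with f_step_ctx : vfs_ctx -> vfs_ctx -> Prop :=
| f_abs : forall M M', f_step M M' -> f_step_ctx (FAbs M) (FAbs M')
| f_pair1 : forall W W' M, f_step_val W W' -> f_step_ctx (FPair W M) (FPair W' M)
| f_pair2 : forall W M M', f_step M M' -> f_step_ctx (FPair W M) (FPair W M').

(* CES : M ::= V | let x := V W in M                                 *)
Inductive ces_tm : Type :=
| CVal : ces_val -> ces_tm
| CLet : ces_val -> ces_val -> ces_tm -> ces_tm
with ces_val : Type :=
| CVar : nat -> ces_val
| CLam : ces_tm -> ces_val.

Fixpoint c_lift_tm (k : nat) (M : ces_tm) : ces_tm :=
  match M with
  | CVal V => CVal (c_lift_val k V)
  | CLet V W N => CLet (c_lift_val k V) (c_lift_val k W) (c_lift_tm (S k) N)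
  end
with c_lift_val (k : nat) (V : ces_val) : ces_val :=
  match V with
  | CVar n => CVar (if Nat.leb k n then S n else n)
  | CLam M => CLam (c_lift_tm (S k) M)
  end.

Fixpoint c_subst_tm (k : nat) (U : ces_val) (M : ces_tm) : ces_tm :=
  match M with
  | CVal V => CVal (c_subst_val k U V)
  | CLet V W N => CLet (c_subst_val k U V) (c_subst_val k U W)
                       (c_subst_tm (S k) (c_lift_val 0 U) N)
  end
with c_subst_val (k : nat) (U : ces_val) (V : ces_val) : ces_val :=
  match V with
  | CVar n => if Nat.ltb n k then CVar n
              else if Nat.eqb n k then U else CVar (pred n)
  | CLam M => CLam (c_subst_tm (S k) (c_lift_val 0 U) M)
  end.

(* c_LET M P = LET y := M in P   (P binds y) *)
Fixpoint c_LET (M : ces_tm) (P : ces_tm) : ces_tm :=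
  match M with
  | CVal V => c_subst_tm 0 V P
  | CLet V W N => CLet V W (c_LET N (c_lift_tm 1 P))
  end.

Inductive c_step : ces_tm -> ces_tm -> Prop :=
| c_betav : forall M V P,  (* let y:=(\x.M)V in P -> LET y:=[V/x]M in P *)
    c_step (CLet (CLam M) V P) (c_LET (c_subst_tm 0 V M) P)
| c_val : forall V V', c_step_val V V' -> c_step (CVal V) (CVal V')
| c_let1 : forall V V' W M, c_step_val V V' -> c_step (CLet V W M) (CLet V' W M)
| c_let2 : forall V W W' M, c_step_val W W' -> c_step (CLet V W M) (CLet V W' M)
| c_let3 : forall V W M M', c_step M M' -> c_step (CLet V W M) (CLet V W M')
with c_step_val : ces_val -> ces_val -> Prop :=
| c_lam : forall M M', c_step M M' -> c_step_val (CLam M) (CLam M').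

(* CNF : M ::= V | V(W, x.M)                                         *)
Inductive cnf_tm : Type :=
| NVal : cnf_val -> cnf_tm
| NApp : cnf_val -> cnf_val -> cnf_tm -> cnf_tm
with cnf_val : Type :=
| NVar : nat -> cnf_val
| NLam : cnf_tm -> cnf_val.

Fixpoint n_lift_tm (k : nat) (M : cnf_tm) : cnf_tm :=
  match M with
  | NVal V => NVal (n_lift_val k V)
  | NApp V W N => NApp (n_lift_val k V) (n_lift_val k W) (n_lift_tm (S k) N)
  end
with n_lift_val (k : nat) (V : cnf_val) : cnf_val :=
  match V with
  | NVar n => NVar (if Nat.leb k n then S n else n)
  | NLam M => NLam (n_lift_tm (S k) M)
  end.

Fixpoint n_subst_tm (k : nat) (U : cnf_val) (M : cnf_tm) : cnf_tm :=
  match M with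
  | NVal V => NVal (n_subst_val k U V)
  | NApp V W N => NApp (n_subst_val k U V) (n_subst_val k U W)
                       (n_subst_tm (S k) (n_lift_val 0 U) N)
  end
with n_subst_val (k : nat) (U : cnf_val) (V : cnf_val) : cnf_val :=
  match V with
  | NVar n => if Nat.ltb n k then NVar n
              else if Nat.eqb n k then U else NVar (pred n)
  | NLam M => NLam (n_subst_tm (S k) (n_lift_val 0 U) M)
  end.

(* n_lsubst N P = <N \ x> P   (P binds x) *)
Fixpoint n_lsubst (N : cnf_tm) (P : cnf_tm) : cnf_tm :=
  match N with
  | NVal V => n_subst_tm 0 V P
  | NApp V W N' => NApp V W (n_lsubst N' (n_lift_tm 1 P))
  end.

Inductive n_step : cnf_tm -> cnf_tm -> Prop :=
| n_betav : forall M W P,  (* (\y.M)(W, x.P) -> <[W/y]M \ x> P *)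
    n_step (NApp (NLam M) W P) (n_lsubst (n_subst_tm 0 W M) P)
| n_val : forall V V', n_step_val V V' -> n_step (NVal V) (NVal V')
| n_app1 : forall V V' W M, n_step_val V V' -> n_step (NApp V W M) (NApp V' W M)
| n_app2 : forall V W W' M, n_step_val W W' -> n_step (NApp V W M) (NApp V W' M)
| n_app3 : forall V W M M', n_step M M' -> n_step (NApp V W M) (NApp V W M')
with n_step_val : cnf_val -> cnf_val -> Prop :=
| n_lam : forall M M', n_step M M' -> n_step_val (NLam M) (NLam M').

Fixpoint Psi (M : ves_tm) : vfs_tm :=
  match M with
  | EVal V => FRet (Psi_v V)
  | ELet V c => FCv (Psi_v V) (Psi_x c)
  end
with Psi_v (V : ves_val) : vfs_val :=
  match V with
  | EVar n => FVar n
  | ELam M => FLam (Psi M)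
  end
with Psi_x (c : ves_ctx) : vfs_ctx :=
  match c with
  | ECTm M => FAbs (Psi M)
  | ECApp W N => FPair (Psi_v W) (Psi N)
  end.

(* Theta(C_v(V,c)) = let x := Theta_v V in Theta_x(c) with x fresh;
   Theta_x(y.M) = [x/y](Theta M) is, up to alpha, Theta M with its
   bound variable being the one bound by the let. *)
Fixpoint Theta (M : vfs_tm) : ves_tm :=
  match M with
  | FRet V => EVal (Theta_v V)
  | FCv V c => ELet (Theta_v V) (Theta_x c)
  end
with Theta_v (V : vfs_val) : ves_val :=
  match V with
  | FVar n => EVar n
  | FLam M => ELam (Theta M)
  end
with Theta_x (c : vfs_ctx) : ves_ctx :=
  match c with
  | FAbs M => ECTm (Theta M)
  | FPair W N => ECApp (Theta_v W) (Theta N)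
  end.

Fixpoint Upsilon (M : ces_tm) : cnf_tm :=
  match M with
  | CVal V => NVal (Upsilon_v V)
  | CLet V W N => NApp (Upsilon_v V) (Upsilon_v W) (Upsilon N)
  end
with Upsilon_v (V : ces_val) : cnf_val :=
  match V with
  | CVar n => NVar n
  | CLam M => NLam (Upsilon M)
  end.

Fixpoint Phi (M : cnf_tm) : ces_tm :=
  match M with
  | NVal V => CVal (Phi_v V)
  | NApp V W N => CLet (Phi_v V) (Phi_v W) (Phi N)
  end
with Phi_v (V : cnf_val) : ces_val :=
  match V with
  | NVar n => CVar n
  | NLam M => CLam (Phi M)
  end.

(* The four maps only rename constructors, so they are mutually inverse by a
   structural induction.  For the simulations, each map must send a root redex
   to a root redex of the same rule; this reduces to the maps commuting with
   lifting, substitution and the operations used in the contracta (LET in VES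
   and C_v(_ : _) in VFS; LET in CES and left substitution in CNF). *)

Scheme ves_tm_mind := Induction for ves_tm Sort Prop
with ves_val_mind := Induction for ves_val Sort Prop
with ves_ctx_mind := Induction for ves_ctx Sort Prop.
Combined Scheme ves_mutind from ves_tm_mind, ves_val_mind, ves_ctx_mind.
Scheme vfs_tm_mind := Induction for vfs_tm Sort Prop
with vfs_val_mind := Induction for vfs_val Sort Prop
with vfs_ctx_mind := Induction for vfs_ctx Sort Prop.
Combined Scheme vfs_mutind from vfs_tm_mind, vfs_val_mind, vfs_ctx_mind.
Scheme ces_tm_mind := Induction for ces_tm Sort Prop
with ces_val_mind := Induction for ces_val Sort Prop.
Combined Scheme ces_mutind from ces_tm_mind, ces_val_mind.
Scheme cnf_tm_mind := Induction for cnf_tm Sort Prop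
with cnf_val_mind := Induction for cnf_val Sort Prop.
Combined Scheme cnf_mutind from cnf_tm_mind, cnf_val_mind.
Scheme e_step_mind := Induction for e_step Sort Prop
with e_step_val_mind := Induction for e_step_val Sort Prop
with e_step_ctx_mind := Induction for e_step_ctx Sort Prop.
Combined Scheme e_step_mutind from e_step_mind, e_step_val_mind, e_step_ctx_mind.
Scheme f_step_mind := Induction for f_step Sort Prop
with f_step_val_mind := Induction for f_step_val Sort Prop
with f_step_ctx_mind := Induction for f_step_ctx Sort Prop.
Combined Scheme f_step_mutind from f_step_mind, f_step_val_mind, f_step_ctx_mind.
Scheme c_step_mind := Induction for c_step Sort Prop
with c_step_val_mind := Induction for c_step_val Sort Prop.
Combined Scheme c_step_mutind from c_step_mind, c_step_val_mind.
Scheme n_step_mind := Induction for n_step Sort Prop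
with n_step_val_mind := Induction for n_step_val Sort Prop.
Combined Scheme n_step_mutind from n_step_mind, n_step_val_mind.

Ltac congruence_by_cases :=
  intros; simpl;
  repeat match goal with
  | |- context [if ?b then _ else _] => destruct b
  end; simpl; f_equal; auto.

Lemma Theta_Psi :
  (forall M, Theta (Psi M) = M) /\
  (forall V, Theta_v (Psi_v V) = V) /\
  (forall c, Theta_x (Psi_x c) = c).
Proof. apply ves_mutind; congruence_by_cases. Qed.

Lemma Psi_Theta :
  (forall M, Psi (Theta M) = M) /\
  (forall V, Psi_v (Theta_v V) = V) /\
  (forall c, Psi_x (Theta_x c) = c).
Proof. apply vfs_mutind; congruence_by_cases. Qed.

Lemma Psi_lift :
  (forall M k, Psi (e_lift_tm k M) = f_lift_tm k (Psi M)) /\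
  (forall V k, Psi_v (e_lift_val k V) = f_lift_val k (Psi_v V)) /\
  (forall c k, Psi_x (e_lift_ctx k c) = f_lift_ctx k (Psi_x c)).
Proof. apply ves_mutind; congruence_by_cases. Qed.

Lemma Psi_subst :
  (forall M k U, Psi (e_subst_tm k U M) = f_subst_tm k (Psi_v U) (Psi M)) /\
  (forall V k U, Psi_v (e_subst_val k U V) = f_subst_val k (Psi_v U) (Psi_v V)) /\
  (forall c k U, Psi_x (e_subst_ctx k U c) = f_subst_ctx k (Psi_v U) (Psi_x c)).
Proof.
  destruct Psi_lift as [_ [Psi_v_lift _]].
  apply ves_mutind; congruence_by_cases; rewrite <- Psi_v_lift; auto.
Qed.

Fixpoint Psi_LET (M P : ves_tm) :
  Psi (e_LET M P) = f_app (Psi M) (FAbs (Psi P))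
with Psi_LETc (c : ves_ctx) (P : ves_tm) :
  Psi_x (e_LETc c P) = f_capp (Psi_x c) (FAbs (Psi P)).
Proof.
  - destruct M as [V | V c]; simpl; [reflexivity | now rewrite Psi_LETc].
  - destruct c as [M | W N]; simpl; now rewrite Psi_LET, (proj1 Psi_lift).
Qed.

(* Transport along the bijection: rewrite the VFS arguments as images under
   Psi, then use the corresponding fact for Psi and Theta (Psi M) = M. *)
Lemma Theta_lift M k : Theta (f_lift_tm k M) = e_lift_tm k (Theta M).
Proof.
  rewrite <- (proj1 Psi_Theta M) at 1.
  now rewrite <- (proj1 Psi_lift), (proj1 Theta_Psi).
Qed.

Lemma Theta_subst M k U :
  Theta (f_subst_tm k U M) = e_subst_tm k (Theta_v U) (Theta M).
Proof.
  rewrite <- (proj1 Psi_Theta M), <- (proj1 (proj2 Psi_Theta) U) at 1.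
  now rewrite <- (proj1 Psi_subst), (proj1 Theta_Psi).
Qed.

Lemma Theta_app M P : Theta (f_app M (FAbs P)) = e_LET (Theta M) (Theta P).
Proof.
  rewrite <- (proj1 Psi_Theta M), <- (proj1 Psi_Theta P) at 1.
  now rewrite <- Psi_LET, (proj1 Theta_Psi).
Qed.

Lemma Psi_step :
  (forall M1 M2, e_step M1 M2 -> f_step (Psi M1) (Psi M2)) /\
  (forall V1 V2, e_step_val V1 V2 -> f_step_val (Psi_v V1) (Psi_v V2)) /\
  (forall c1 c2, e_step_ctx c1 c2 -> f_step_ctx (Psi_x c1) (Psi_x c2)).
Proof.
  apply e_step_mutind; intros; simpl.
  - rewrite Psi_LET, (proj1 Psi_lift). apply f_Bv.
  - rewrite (proj1 Psi_subst). apply f_sigmav.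
  - now apply f_ret.
  - now apply f_cv1.
  - now apply f_cv2.
  - now apply f_lam.
  - now apply f_abs.
  - now apply f_pair1.
  - now apply f_pair2.
Qed.

Lemma Theta_step :
  (forall M1 M2, f_step M1 M2 -> e_step (Theta M1) (Theta M2)) /\
  (forall V1 V2, f_step_val V1 V2 -> e_step_val (Theta_v V1) (Theta_v V2)) /\
  (forall c1 c2, f_step_ctx c1 c2 -> e_step_ctx (Theta_x c1) (Theta_x c2)).
Proof.
  apply f_step_mutind; intros; simpl.
  - rewrite Theta_app, Theta_lift. apply e_Bv.
  - rewrite Theta_subst. apply e_letv.
  - now apply e_val.
  - now apply e_let1.
  - now apply e_let2.
  - now apply e_lam.
  - now apply e_ctm.
  - now apply e_capp1.
  - now apply e_capp2.
Qed.

Lemma Phi_Upsilon :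
  (forall M, Phi (Upsilon M) = M) /\ (forall V, Phi_v (Upsilon_v V) = V).
Proof. apply ces_mutind; congruence_by_cases. Qed.

Lemma Upsilon_Phi :
  (forall M, Upsilon (Phi M) = M) /\ (forall V, Upsilon_v (Phi_v V) = V).
Proof. apply cnf_mutind; congruence_by_cases. Qed.

Lemma Upsilon_lift :
  (forall M k, Upsilon (c_lift_tm k M) = n_lift_tm k (Upsilon M)) /\
  (forall V k, Upsilon_v (c_lift_val k V) = n_lift_val k (Upsilon_v V)).
Proof. apply ces_mutind; congruence_by_cases. Qed.

Lemma Upsilon_subst :
  (forall M k U,
     Upsilon (c_subst_tm k U M) = n_subst_tm k (Upsilon_v U) (Upsilon M)) /\
  (forall V k U,
     Upsilon_v (c_subst_val k U V) = n_subst_val k (Upsilon_v U) (Upsilon_v V)).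
Proof.
  destruct Upsilon_lift as [_ Upsilon_v_lift].
  apply ces_mutind; congruence_by_cases; rewrite <- Upsilon_v_lift; auto.
Qed.

Lemma Upsilon_LET M P : Upsilon (c_LET M P) = n_lsubst (Upsilon M) (Upsilon P).
Proof.
  revert P; induction M as [V | V W N IHN]; intros P; simpl.
  - apply (proj1 Upsilon_subst).
  - now rewrite IHN, (proj1 Upsilon_lift).
Qed.

Lemma Phi_subst M k U : Phi (n_subst_tm k U M) = c_subst_tm k (Phi_v U) (Phi M).
Proof.
  rewrite <- (proj1 Upsilon_Phi M), <- (proj2 Upsilon_Phi U) at 1.
  now rewrite <- (proj1 Upsilon_subst), (proj1 Phi_Upsilon).
Qed.

Lemma Phi_lsubst M P : Phi (n_lsubst M P) = c_LET (Phi M) (Phi P).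
Proof.
  rewrite <- (proj1 Upsilon_Phi M), <- (proj1 Upsilon_Phi P) at 1.
  now rewrite <- Upsilon_LET, (proj1 Phi_Upsilon).
Qed.

Lemma Upsilon_step :
  (forall M1 M2, c_step M1 M2 -> n_step (Upsilon M1) (Upsilon M2)) /\
  (forall V1 V2, c_step_val V1 V2 -> n_step_val (Upsilon_v V1) (Upsilon_v V2)).
Proof.
  apply c_step_mutind; intros; simpl.
  - rewrite Upsilon_LET, (proj1 Upsilon_subst). apply n_betav.
  - now apply n_val.
  - now apply n_app1.
  - now apply n_app2.
  - now apply n_app3.
  - now apply n_lam.
Qed.

Lemma Phi_step :
  (forall M1 M2, n_step M1 M2 -> c_step (Phi M1) (Phi M2)) /\
  (forall V1 V2, n_step_val V1 V2 -> c_step_val (Phi_v V1) (Phi_v V2)).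
Proof.
  apply n_step_mutind; intros; simpl.
  - rewrite Phi_lsubst, Phi_subst. apply c_betav.
  - now apply c_val.
  - now apply c_let1.
  - now apply c_let2.
  - now apply c_let3.
  - now apply c_lam.
Qed.

Theorem theorem4 :
  (* (a) VES ~ VFS *)
  ((forall M : ves_tm, Theta (Psi M) = M) /\
   (forall V : ves_val, Theta_v (Psi_v V) = V) /\
   (forall c : ves_ctx, Theta_x (Psi_x c) = c) /\
   (forall M : vfs_tm, Psi (Theta M) = M) /\
   (forall V : vfs_val, Psi_v (Theta_v V) = V) /\
   (forall c : vfs_ctx, Psi_x (Theta_x c) = c) /\
   (forall M1 M2 : ves_tm, e_step M1 M2 -> f_step (Psi M1) (Psi M2)) /\
   (forall M1 M2 : vfs_tm, f_step M1 M2 -> e_step (Theta M1) (Theta M2))) /\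
  (* (b) CES ~ CNF *)
  ((forall M : ces_tm, Phi (Upsilon M) = M) /\
   (forall V : ces_val, Phi_v (Upsilon_v V) = V) /\
   (forall M : cnf_tm, Upsilon (Phi M) = M) /\
   (forall V : cnf_val, Upsilon_v (Phi_v V) = V) /\
   (forall M1 M2 : ces_tm, c_step M1 M2 -> n_step (Upsilon M1) (Upsilon M2)) /\
   (forall M1 M2 : cnf_tm, n_step M1 M2 -> c_step (Phi M1) (Phi M2))).
Proof.
  destruct Theta_Psi as [? [? ?]], Psi_Theta as [? [? ?]].
  destruct Phi_Upsilon, Upsilon_Phi.
  repeat split; auto;
    first [apply Psi_step | apply Theta_step | apply Upsilon_step | apply Phi_step].
Qed.
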